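(* Let $T$ be a basic maximal rigid object of $\mathcal{C}_n$ with top summand $T_1=(1,n-1)$, let $*$ be either $\mathcal{T}$ or $\mathcal{D}$, and let $X\in\mathcal{F}$. (i) $R(X)\cap\operatorname{add}T$ is empty if and only if $X\in\operatorname{add}\tau T$. (ii) For any $T$-subwing triple $(T_i;T_j,T_k)$, at most one of $T_j$ and $T_k$ lies in $R^*(X)$. (iii) If $R^*(X)\cap\operatorname{add}T$ is non-empty, there is a unique string in the quiver of $\Lambda_T$ which traverses each of the vertices corresponding to the indecomposables in $R^*(X)\cap\operatorname{add}T$ exactly once, traverses no other vertex, and ends in the vertex corresponding to the summand in $R^*(X)\cap\operatorname{add}T$ of highest quasilength. (iv) A string as in (iii) contains no $\mathcal{D}$-arrow and no inverse of a $\mathcal{D}$-arrow.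
   Context: Let $k$ be algebraically closed, $n\ge2$, $\mathcal{T}_n$ the tube of rank $n$ (finite-dimensional nilpotent representations of the cyclically oriented $\tilde A_{n-1}$-quiver; AR-translation $\tau$), $\mathcal{C}_n=D^b(\mathcal{T}_n)/\tau^{-1}[1]$ the cluster tube, with indecomposables identified with those of $\mathcal{T}_n$. Indecomposables have coordinates $(a,b)$, $a\in\mathbb{Z}/n$ (represented in $\{1,\dots,n\}$), $b\ge1$ the quasilength, with $\tau(a,b)=(a-1,b)$ and irreducible maps $(a,b)\to(a,b+1)$, $(a,b)\to(a+1,b-1)$. For indecomposables $X,Y$, $\operatorname{Hom}_{\mathcal{C}_n}(X,Y)=\operatorname{Hom}_{\mathcal{T}_n}(X,Y)\oplus\operatorname{Hom}_{D^b}(X,\tau^{-1}Y[1])$; elements of the first summand are $\mathcal{T}$-maps, of the second $\mathcal{D}$-maps. $R^{\mathcal{T}}(X)$ (resp. $R^{\mathcal{D}}(X)$) is the set of indecomposables with a nonzero $\mathcal{T}$-map (resp. $\mathcal{D}$-map) to $X$, and $R(X)=R^{\mathcal{T}}(X)\cup R^{\mathcal{D}}(X)$. Wing of $X=(a,i)$, $i\le n-1$: $\mathcal{W}_X=\{(a+s,i'):s\ge0,i'\ge1,s+i'\le i\}$. $T=\bigoplus_{i=1}^{n-1}T_i$ is basic maximal rigid ($\operatorname{Ext}^1(T,T)=0$ and $\operatorname{Ext}^1(T\oplus Y,T\oplus Y)=0\Rightarrow Y\in\operatorname{add}T$); its unique summand of quasilength $n-1$ is the top summand $T_1$, all summands lie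 in $\mathcal{W}_{T_1}$, and coordinates are chosen with $T_1=(1,n-1)$. $\mathcal{F}$ is the set of indecomposables $(a,b)$, $a\in\{1,\dots,n\}$, with $b\le n-1$ or $a+b\le2n-1$. Subwing triples: non-degenerate $(X;Y,Z)$ with $X=(a,b)$, $3\le b\le n-1$, $Y=(a,c)$, $Z=(a+c+1,b-c-1)$, $1\le c\le b-2$; degenerate: $X=(a,b)$, $2\le b\le n-1$, and $(Y,Z)=((a,b-1),0)$ or $(0,(a+1,b-1))$; a $T$-subwing triple is one whose nonzero members are summands of $T$. The quiver of $\Lambda_T=\operatorname{End}_{\mathcal{C}_n}(T)^{\mathrm{op}}$ has vertex $i$ for each $T_i$ and arrows $i\to j$ for maps $T_j\to T_i$ irreducible in $\operatorname{add}T$, called $\mathcal{T}$- or $\mathcal{D}$-arrows according to the type of map. A string is a trivial string at a vertex, or a word in arrows and formal inverses with matching endpoints, no letter followed by its inverse, and no subword of it or its inverse a zero relation of $\Lambda_T$; its traversed vertices are the endpoints of its letters. *)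

From mathcomp Require Import all_boot.
Set Implicit Arguments. Unset Strict Implicit. Unset Printing Implicit Defensive.

(* Indecomposable (a,b) of the tube of rank n: the ordinal i : 'I_n stands for
   the paper's coordinate a = i + 1 in {1,...,n}; b is the quasilength.
   (a,b) is the uniserial module with socle at a and composition factors at
   a, a+1, ..., a+b-1 (so (a,b) -> (a,b+1) is mono, (a,b) -> (a+1,b-1) is epi). *)
Notation ind n := ('I_n * nat)%type.

Section ClusterTube.
Variable n : nat.

Definition valid (X : ind n) : bool := 0 < X.2.

Definition shift (a : 'I_n) (k : nat) : 'I_n :=
  Ordinal (ltn_pmod (a + k) (leq_ltn_trans (leq0n a) (ltn_ord a))).

Definition tau (X : ind n) : ind n := (shift X.1 n.-1, X.2).

(* Basis of Hom_T(X,Y): index s, the map X ->> (a+s, b-s) >-> Y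
   (quotient of X of length b-s, which is a submodule of Y). *)
Definition homT_idx (X Y : ind n) (s : nat) : bool :=
  [&& s < X.2, shift X.1 s == Y.1 & X.2 - s <= Y.2].

(* A basis morphism of C_n: (true, s) is the T-map of index s;
   (false, s) is the D-map dual (Serre duality
   Hom_D(X, tau^-1 Y [1]) = Ext^1(X, tau^-1 Y) ~ D Hom_T(Y, tau^2 X))
   to the T-basis map of index s from Y to tau^2 X. *)
Definition mor := (bool * nat)%type.

Definition isbasis (X Y : ind n) (m : mor) : bool :=
  if m.1 then homT_idx X Y m.2 else homT_idx Y (tau (tau X)) m.2.

(* composition g o f of basis morphisms f : X -> Y, g : Y -> Z
   (None means zero; otherwise a nonzero scalar multiple of the result). *)
Definition comp (X Z : ind n) (g f : mor) : option mor :=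
  match f.1, g.1 with
  | true, true => if f.2 + g.2 < X.2 then Some (true, f.2 + g.2) else None
  | false, true =>
      if (g.2 <= f.2) && isbasis X Z (false, f.2 - g.2)
      then Some (false, f.2 - g.2) else None
  | true, false =>
      if (f.2 <= g.2) && isbasis X Z (false, g.2 - f.2)
      then Some (false, g.2 - f.2) else None
  | false, false => None
  end.

Definition homC_nz (X Y : ind n) : Prop := exists m, isbasis X Y m.

(* Ext^1_C(X,Y) = Hom_C(X, Y[1]) and [1] = tau in C_n *)
Definition ext1_nz (X Y : ind n) : Prop := homC_nz X (tau Y).

Definition rigid (T : seq (ind n)) : Prop :=
  forall X Y, X \in T -> Y \in T -> ~ ext1_nz X Y.

Definition maxrigid (T : seq (ind n)) : Prop :=
  [/\ uniq T, all valid T, rigid T &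
   forall Y, valid Y ->
     (forall X, X \in T -> ~ ext1_nz X Y /\ ~ ext1_nz Y X) ->
     ~ ext1_nz Y Y -> Y \in T].

(* R^*(X): k = true for *=T, k = false for *=D *)
Definition inRk (k : bool) (X Y : ind n) : Prop :=
  valid Y /\ exists s, isbasis Y X (k, s).
Definition inR (X Y : ind n) : Prop := inRk true X Y \/ inRk false X Y.

(* the set F (paper coordinate a = X.1 + 1) *)
Definition inF (X : ind n) : Prop :=
  valid X /\ (X.2 <= n.-1 \/ X.1 + 1 + X.2 <= 2 * n - 1).

(* subwing triples; None stands for the zero object *)
Definition subwing (X : ind n) (Y Z : option (ind n)) : Prop :=
  (exists c, [/\ 3 <= X.2 <= n.-1, 1 <= c <= X.2 - 2,
      Y = Some (X.1, c) & Z = Some (shift X.1 (c + 1), X.2 - c - 1)])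
  \/ (2 <= X.2 <= n.-1 /\
      ((Y = Some (X.1, X.2 - 1) /\ Z = None) \/
       (Y = None /\ Z = Some (shift X.1 1, X.2 - 1)))).

Definition optin (T : seq (ind n)) (o : option (ind n)) : Prop :=
  match o with Some W => W \in T | None => True end.

Definition T_subwing (T : seq (ind n)) X Y Z : Prop :=
  subwing X Y Z /\ X \in T /\ optin T Y /\ optin T Z.

Definition optR (k : bool) (X : ind n) (o : option (ind n)) : Prop :=
  match o with Some W => inRk k X W | None => False end.

Definition rad (X Y : ind n) (m : mor) : bool :=
  isbasis X Y m && ~~ ((X == Y) && (m == (true, 0))).

Definition inrad2 (T : seq (ind n)) (X Y : ind n) (m : mor) : Prop :=
  exists Z, Z \in T /\ exists f g, [/\ rad X Z f, rad Z Y g & comp X Y g f = Some m].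

Definition irred (T : seq (ind n)) (X Y : ind n) (m : mor) : Prop :=
  [/\ X \in T, Y \in T, rad X Y m & ~ inrad2 T X Y m].

(* arrow asrc -> atgt of the quiver, given by the irreducible map
   amap : atgt -> asrc; it is a T-arrow iff (amap).1 = true *)
Record arrow := Arrow { asrc : ind n; atgt : ind n; amap : mor }.
Definition is_arrow (T : seq (ind n)) (a : arrow) : Prop :=
  irred T (atgt a) (asrc a) (amap a).

(* composite map of a path a :: ps (arrows in path order,
   asrc of each arrow = atgt of the previous one), a map atgt(last) -> asrc a *)
Fixpoint pathcomp (a : arrow) (ps : seq arrow) : option mor :=
  match ps with
  | [::] => Some (amap a)
  | b :: ps' =>
      match pathcomp b ps' with
      | Some m => comp (atgt (last b ps')) (asrc a) (amap a) m
      | None => None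
      end
  end.

Definition nonzero_path (ps : seq arrow) : Prop :=
  match ps with [::] => True | a :: ps' => pathcomp a ps' <> None end.

(* letters: an arrow (ldir = true) or its formal inverse (ldir = false) *)
Record letter := Letter { larr : arrow; ldir : bool }.
Definition lfrom (l : letter) := if ldir l then asrc (larr l) else atgt (larr l).
Definition lto (l : letter) := if ldir l then atgt (larr l) else asrc (larr l).

Record str := Str { sstart : ind n; sletters : seq letter }.

Fixpoint walk (T : seq (ind n)) (v : ind n) (ls : seq letter) : Prop :=
  match ls with
  | [::] => v \in T
  | l :: ls' => [/\ v \in T, is_arrow T (larr l), lfrom l = v & walk T (lto l) ls']
  end.

Fixpoint noinv (ls : seq letter) : Prop :=
  match ls with
  | l :: ((l' :: _) as ls') =>
      ~ (larr l = larr l' /\ ldir l <> ldir l') /\ noinv ls'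
  | _ => True
  end.

(* no subword which is (or whose inverse is) a zero relation *)
Definition nozero (ls : seq letter) : Prop :=
  forall i j, let seg := take j (drop i ls) in
    (all ldir seg -> nonzero_path (map larr seg)) /\
    (all (fun l => ~~ ldir l) seg -> nonzero_path (rev (map larr seg))).

Definition isString (T : seq (ind n)) (s : str) : Prop :=
  [/\ walk T (sstart s) (sletters s), noinv (sletters s) & nozero (sletters s)].

Definition verts (s : str) : seq (ind n) := sstart s :: map lto (sletters s).
Definition send (s : str) : ind n := last (sstart s) (map lto (sletters s)).

Definition good_string (T : seq (ind n)) (k : bool) (X Y : ind n) (s : str) : Prop :=
  [/\ isString T s, uniq (verts s),
      (forall Z, Z \in verts s <-> (Z \in T /\ inRk k X Z)) & send s = Y].

Definition no_D_letter (s : str) : Prop :=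
  all (fun l => (amap (larr l)).1) (sletters s).

End ClusterTube.

From Pilot Require Import Defs.
From mathcomp Require Import all_boot zify.
Set Implicit Arguments. Unset Strict Implicit. Unset Printing Implicit Defensive.

(* The summands of T all lie in the wing of T1, where the indecomposable (a,b) is
   the interval [a, a+b) and Ext^1 between two of them is nonzero exactly when the
   intervals cross: T is a non-crossing family of intervals.  In the wing, R^T(X)
   and R^D(X) consist of the intervals through one fixed point, so R^*(X) meets
   add T in a chain under inclusion, convex in T.  Consecutive members of the chain
   share a start or an end and are joined by an irreducible T-map (an inclusion or
   a quotient), while a D-map between nested summands is never irreducible since it
   factors through the D-loop at T1.  Reading the chain upwards gives the unique
   string of (iii), which has no D-letters.  Part (i) comes from the maximality of
   T, and (ii) holds because the two members of a subwing triple are disjoint. *)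

Lemma has_argmax (A : eqType) (f : A -> nat) (P : pred A) (xs : seq A) : has P xs ->
  exists2 y, y \in xs & P y /\ {in xs, forall z, P z -> f z <= f y}.
Proof.
case/hasP=> x xs_x Px.
have ex_m : exists m, has (fun z => P z && (f z == m)) xs.
  by exists (f x); apply/hasP; exists x; rewrite ?Px ?eqxx.
have bound m : has (fun z => P z && (f z == m)) xs -> m <= \max_(z <- xs) f z.
  by case/hasP=> z xs_z /andP[_ /eqP <-]; apply: leq_bigmax_seq.
case: (ex_maxnP ex_m bound) => m /hasP[y xs_y /andP[Py /eqP fy]] max_m.
exists y => //; split=> // z xs_z Pz; rewrite fy; apply: max_m.
by apply/hasP; exists z; rewrite ?Pz ?eqxx.
Qed.

Lemma all_last (A : Type) (P : pred A) x xs : all P (x :: xs) -> P (last x xs).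
Proof. by elim: xs x => [|y xs IH] x /andP[? ?] //=; apply: IH. Qed.

Lemma count_predD1 (A : eqType) (P : pred A) x xs : x \in xs -> P x ->
  count (predD1 P x) xs < count P xs.
Proof.
elim: xs => //= y xs IH; rewrite inE => /orP[/eqP <- Px|xs_x Px].
  by rewrite eqxx Px add0n add1n ltnS; apply: sub_count => z /andP[].
by rewrite -addnS leq_add ?IH //; case: (y != x).
Qed.

Section Tube.
Variable n : nat.
Implicit Types (A B U V W X Y Z : ind n) (p s : nat).

Lemma ind_eq U V : U.1 = V.1 :> nat -> U.2 = V.2 -> U = V.
Proof. by case: U V => [a b] [c d] /= /val_inj -> ->. Qed.

Lemma homT_idxE X Y s :
  homT_idx X Y s <-> [/\ s < X.2, (X.1 + s) %% n = Y.1 & X.2 - s <= Y.2].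
Proof.
split; first by case/and3P => ? /eqP <-.
by case=> ? e ?; apply/and3P; split => //; apply/eqP/val_inj.
Qed.

Lemma tau_fst Y : (tau Y).1 = (Y.1 + n.-1) %% n :> nat.
Proof. by []. Qed.

Lemma tau_snd Y : (tau Y).2 = Y.2.
Proof. by []. Qed.

Lemma modn_double_cases a : a < n + n ->
  (a < n /\ a %% n = a) \/ (n <= a /\ a %% n = a - n).
Proof.
case: (ltnP a n) => [lt_an|le_na] lt_a2n; first by left; rewrite modn_small.
right; split => //; rewrite -{1}(subnK le_na) modnDr modn_small //; lia.
Qed.

Lemma tau_fst_cases Y :
  (0 < Y.1 /\ (tau Y).1 = Y.1.-1 :> nat) \/ (Y.1 = 0 :> nat /\ (tau Y).1 = n.-1 :> nat).
Proof.
have := ltn_ord Y.1; rewrite tau_fst => lt_Yn.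
have [[? ->]|[? ->]] := @modn_double_cases (Y.1 + n.-1) ltac:(lia); [right|left]; lia.
Qed.

Lemma tau2_fst Y : 2 <= n -> (tau (tau Y)).1 = (Y.1 + (n - 2)) %% n :> nat.
Proof.
move=> n_ge2; rewrite !tau_fst modnDml.
have -> : Y.1 + n.-1 + n.-1 = Y.1 + (n - 2) + n by lia.
by rewrite modnDr.
Qed.

Lemma homT_idx_tau X Y s : homT_idx X Y s <-> homT_idx (tau X) (tau Y) s.
Proof.
rewrite !homT_idxE !tau_fst modnDml addnAC.
split=> [[? <- ?]|[? e ?]]; first by rewrite modnDml.
split => //; rewrite -(modn_small (ltn_ord Y.1)); apply/eqP.
by rewrite -(eqn_modDr n.-1) e.
Qed.

Lemma ext1_sym U V : ext1_nz U V -> ext1_nz V U.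
Proof.
case=> [[[] s] b]; rewrite /isbasis /= in b.
- by exists (false, s); apply/(homT_idx_tau U (tau V)).
- by exists (true, s); apply/(homT_idx_tau V (tau U)).
Qed.

Lemma ext1_self U : 2 <= n -> U.2 <= n.-1 -> ~ ext1_nz U U.
Proof.
move=> n_ge2 le_U.
have homT_self s : homT_idx U (tau U) s -> n.-1 < U.2.
  case/homT_idxE => lt_s e _; move: e; rewrite tau_fst => /eqP.
  rewrite eqn_modDl (@modn_small n.-1) ?ltn_predL; last by lia.
  move/eqP => e; have := leq_mod s n; lia.
case=> [[[] s] b]; rewrite /isbasis /= in b.
- by have := homT_self s b; lia.
- by have := homT_self s (proj2 (homT_idx_tau _ _ _) b); lia.
Qed.

Definition wing U := 0 < U.2 /\ U.1 + U.2 <= n.-1.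

Definition crossing U V := U.1 < V.1 /\ V.1 <= U.1 + U.2 /\ U.1 + U.2 < V.1 + V.2.

Lemma homT_idx_wing U V s : U.1 + U.2 <= n.-1 ->
  homT_idx U V s <-> [/\ V.1 = U.1 + s :> nat, s < U.2 & U.1 + U.2 <= V.1 + V.2].
Proof.
move=> wU; rewrite homT_idxE.
split=> [[? e ?]|[e ? ?]].
- by rewrite modn_small in e; [split; lia | lia].
- by split => //; [rewrite modn_small; lia | lia].
Qed.

Lemma homT_tau_crossing U V s : wing U -> wing V -> homT_idx U (tau V) s -> crossing U V.
Proof.
move=> [_ wU] [_ wV] /(homT_idx_wing _ _ wU) [e ? le_end].
rewrite tau_snd in le_end.
have [[? eV]|[? eV]] := tau_fst_cases V; rewrite eV in e le_end; rewrite /crossing; lia.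
Qed.

Lemma crossing_ext1 U V : wing U -> crossing U V -> ext1_nz U V.
Proof.
move=> [_ wU] [? [? ?]]; exists (true, V.1.-1 - U.1); apply/(homT_idx_wing _ _ wU).
rewrite tau_snd.
have [[? ->]|[? ->]] := tau_fst_cases V; split => /=; lia.
Qed.

Lemma ext1_wingE U V : wing U -> wing V -> ext1_nz U V <-> crossing U V \/ crossing V U.
Proof.
move=> wU wV; split => [[[[] s] b]|[cUV|cVU]].
- by left; exact: homT_tau_crossing b.
- by right; exact: homT_tau_crossing wV wU ((homT_idx_tau V (tau U) s).2 b).
- exact: crossing_ext1.
- exact/ext1_sym/crossing_ext1.
Qed.

Definition covers p U := U.1 <= p < U.1 + U.2.

Definition subint U V := V.1 <= U.1 /\ U.1 + U.2 <= V.1 + V.2.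

Lemma subint_eq U V : subint U V -> V.2 <= U.2 -> U = V.
Proof. by move=> [? ?] ?; apply: ind_eq; lia. Qed.

Definition D_point X := (X.1 + X.2 + 2) %% n.

(* In the wing, R^T(X) and R^D(X) consist of intervals through one composition
   factor: the socle of X for T-maps, the top of tau^-2 X for D-maps. *)
Definition R_point k X : nat := if k then nat_of_ord X.1 else (D_point X).-1.

Definition R_wing k X U : bool :=
  if k then [&& U.1 <= X.1, X.1 < U.1 + U.2 & U.1 + U.2 <= X.1 + X.2]
  else [&& U.1 < D_point X, D_point X <= U.1 + U.2 & D_point X <= U.1 + X.2].

Lemma D_pointE X U s : 2 <= n -> U.1 + (X.2 - s) < n -> s <= X.2 ->
  (X.1 + s) %% n = (U.1 + (n - 2)) %% n <-> D_point X = U.1 + (X.2 - s).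
Proof.
move=> n_ge2 lt_n le_s; rewrite /D_point -(modn_small lt_n) -(modnDr (U.1 + (X.2 - s)) n).
have -> : X.1 + X.2 + 2 = X.1 + s + (X.2 - s + 2) by lia.
have -> : U.1 + (X.2 - s) + n = U.1 + (n - 2) + (X.2 - s + 2) by lia.
split=> [e|]; first by rewrite -modnDml e modnDml.
by move/eqP; rewrite eqn_modDr => /eqP.
Qed.

Lemma R_wingE k X U : 2 <= n -> wing U -> (exists s, isbasis U X (k, s)) <-> R_wing k X U.
Proof.
move=> n_ge2 [_ wU]; case: k; rewrite /isbasis /R_wing /=.
  split=> [[s /(homT_idx_wing _ _ wU) [? ? ?]]|/and3P[? ? ?]].
    by apply/and3P; split; lia.
  by exists (X.1 - U.1); apply/(homT_idx_wing _ _ wU); split; lia.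
have lt_D : D_point X < n by rewrite ltn_mod; lia.
split=> [[s /homT_idxE [lt_s e le_s]]|/and3P[? ? ?]].
  rewrite tau2_fst // in e; rewrite !tau_snd in le_s.
  have lt_n : U.1 + (X.2 - s) < n by lia.
  by rewrite (proj1 (D_pointE n_ge2 lt_n (ltnW lt_s)) e); apply/and3P; split; lia.
exists (X.2 - (D_point X - U.1)); apply/homT_idxE; rewrite tau2_fst // !tau_snd.
split; [lia | apply: (proj2 (D_pointE n_ge2 _ _)); lia | lia].
Qed.

Lemma R_wing_covers k X U : R_wing k X U -> covers (R_point k X) U.
Proof. by case: k => /and3P[? ? ?]; rewrite /covers /R_point; lia. Qed.

Lemma R_wing_convex k X U V W :
  R_wing k X U -> R_wing k X W -> subint U V -> subint V W -> R_wing k X V.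
Proof. by case: k => /and3P[? ? ?] /and3P[? ? ?] [? ?] [? ?]; apply/and3P; split; lia. Qed.

Lemma radP U V m : rad U V m -> isbasis U V m /\ (U = V -> m <> (true, 0)).
Proof. by case/andP=> b nid; split=> // eUV em; move: nid; rewrite eUV em !eqxx. Qed.

Lemma rad_basis U V m : isbasis U V m -> U <> V \/ m.1 = false -> rad U V m.
Proof.
move=> b nid; rewrite /rad b; apply/negP=> /andP[/eqP eUV /eqP em].
by case: nid => [/(_ eUV)|]; rewrite ?em.
Qed.

Lemma comp_someT X Z f g t : Defs.comp X Z g f = Some (true, t) ->
  [/\ f.1, g.1, t = f.2 + g.2 & f.2 + g.2 < X.2].
Proof.
case: f g => [[] a] [[] b]; rewrite /Defs.comp /= //; try by case: ifP.
by case: ifP => // ? [<-].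
Qed.

(* The letters of the strings of (iii) are T-maps between intervals through [p]:
   an arrow is a quotient map onto an interval with the same end, an inverse
   arrow an inclusion with the same start. *)
Definition tube_letter p (l : letter n) : bool :=
  [&& covers p (asrc (larr l)), covers p (atgt (larr l)) &
      if ldir l then (amap (larr l) == (true, (asrc (larr l)).1 - (atgt (larr l)).1))
                     && ((atgt (larr l)).1 <= (asrc (larr l)).1)
      else amap (larr l) == (true, 0)].

Definition linked : rel (letter n) := fun l l' => lto l == lfrom l'.

Lemma walk_linked T v ls : walk T v ls -> sorted linked ls.
Proof.
elim: ls v => [|l ls IH] v //= [_ _ _ w]; have := IH _ w.
by case: ls w {IH} => [|l' ls] //= [_ _ e _] ->; rewrite /linked e eqxx.
Qed.

Lemma pathcomp_forward p l ls : path linked l ls ->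
  all (@ldir n) (l :: ls) -> all (tube_letter p) (l :: ls) ->
  pathcomp (larr l) (map (@larr n) ls) =
    Some (true, (asrc (larr l)).1 - (atgt (larr (last l ls))).1)
  /\ (atgt (larr (last l ls))).1 <= (asrc (larr l)).1.
Proof.
elim: ls l => [|l' ls IH] l /=.
  by move=> _ /andP[dl _] /andP[/and3P[_ _]]; rewrite dl => /andP[/eqP -> ?].
case/andP=> /eqP link path_ls /andP[dl dls] /andP[gl gls].
have [-> le_last] := IH l' path_ls dls gls.
have /and3P[_ /andP[_ lt_last] _] := all_last gls.
move: gl link; rewrite /tube_letter /lto /lfrom dl (andP dls).1.
case/and3P=> /andP[le_A _] _ /andP[/eqP em le_BA] eB.
rewrite -eB in le_last; rewrite last_map em /Defs.comp /= -eB ifT; last by lia.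
by split; [do 2 f_equal; lia | lia].
Qed.

Lemma pathcomp_backward (a : arrow n) ps :
  all (fun b => (amap b == (true, 0)) && (0 < (atgt b).2)) (a :: ps) ->
  pathcomp a ps = Some (true, 0).
Proof.
elim: ps a => [|b ps IH] a /= /andP[/andP[/eqP em _] hps]; first by rewrite em.
rewrite IH // em /Defs.comp /=.
by have /andP[_ ->] := all_last hps.
Qed.

Lemma nozero_tube_letters p ls : sorted linked ls -> all (tube_letter p) ls -> nozero ls.
Proof.
move=> lk tube i j /=; set seg := take j (drop i ls).
have lk_seg : sorted linked seg by apply/take_sorted/drop_sorted.
have tube_seg : all (tube_letter p) seg.
  move: tube; rewrite -(cat_take_drop i ls) all_cat => /andP[_].
  by rewrite -(cat_take_drop j (drop i ls)) all_cat => /andP[].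
split.
  case: seg lk_seg tube_seg => [|l s] //= lk_s tube_s dir_s.
  by rewrite (pathcomp_forward lk_s dir_s tube_s).1.
move=> inv; rewrite -map_rev.
have : all (fun b => (amap b == (true, 0)) && (0 < (atgt b).2)) (map (@larr n) (rev seg)).
  rewrite all_map all_rev.
  apply: (@sub_all _ (predI (tube_letter p) (fun l => ~~ ldir l))); last first.
    by rewrite all_predI tube_seg.
  move=> l /andP[/and3P[_ cB +] /negbTE d]; rewrite d /= => ->.
  by move: cB; rewrite /covers; lia.
by case: (rev seg) => [|l s] //= /pathcomp_backward ->.
Qed.

Lemma walk_rcons T v ls (l : letter n) : walk T v (rcons ls l) <->
  walk T v ls /\ [/\ is_arrow T (larr l), lfrom l = last v (map (@lto n) ls) & lto l \in T].
Proof.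
elim: ls v => [|l0 ls IH] v /=; first by split=> [[? ? ? ?]|[? [? ? ?]]].
split=> [[? ? ? /IH[? ?]]|[[? ? ? ?] ?]] //.
by split => //; apply/IH.
Qed.

Lemma verts_rcons v ls (l : letter n) :
  verts (Str v (rcons ls l)) = rcons (verts (Str v ls)) (lto l).
Proof. by rewrite /verts /= map_rcons. Qed.

Lemma send_rcons v ls (l : letter n) : send (Str v (rcons ls l)) = lto l.
Proof. by rewrite /send /= map_rcons last_rcons. Qed.

Lemma walk_noinv T v (ls : seq (letter n)) : walk T v ls -> uniq (verts (Str v ls)) -> noinv ls.
Proof.
rewrite /verts /=; elim: ls v => [|l ls IH] v //= [_ _ from_l w] /andP[v_new uniq_ls].
case: ls IH w uniq_ls v_new => [|l' ls] IH w uniq_ls v_new //=.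
split; last exact: IH w uniq_ls.
case=> e_arr ne_dir; case: w => _ _ from_l' _; move: v_new; rewrite !inE -from_l.
suff -> : lto l' = lfrom l by rewrite eqxx orbT.
by move: from_l'; rewrite /lto /lfrom -e_arr; case: (ldir l) ne_dir; case: (ldir l').
Qed.

Section Summands.
Variables (T : seq (ind n)) (T1 : ind n).
Hypotheses (n_ge2 : 2 <= n) (T_maxrigid : maxrigid T) (T1_T : T1 \in T)
  (T1_fst : T1.1 = 0 :> nat) (T1_snd : T1.2 = n.-1).

Lemma T1_wing : wing T1.
Proof. by rewrite /wing T1_fst T1_snd; split; lia. Qed.

Lemma summand_wing Y : Y \in T -> wing Y.
Proof.
move=> YT; case: T_maxrigid => _ /allP validT rigidT _; have Y_pos := validT Y YT.
have le_Y : Y.2 <= n.-1.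
  rewrite leqNgt; apply/negP => lt_Y; apply: (rigidT Y Y YT YT).
  by exists (true, n.-1); apply/homT_idxE; rewrite tau_fst tau_snd; split => /=; lia.
split => //; rewrite leqNgt; apply/negP => out; apply: (rigidT T1 Y T1_T YT).
apply: crossing_ext1 T1_wing _; have := ltn_ord Y.1.
by rewrite /crossing T1_fst T1_snd; split; lia.
Qed.

Lemma summands_noncrossing U V : U \in T -> V \in T -> ~ crossing U V.
Proof.
move=> UT VT cUV; case: T_maxrigid => _ _ rigidT _; apply: (rigidT U V UT VT).
by apply/ext1_wingE; [exact: summand_wing | exact: summand_wing | left].
Qed.

Lemma summands_nested p U V : U \in T -> V \in T -> covers p U -> covers p V ->
  subint U V \/ subint V U.
Proof.
move=> UT VT; have := summands_noncrossing UT VT; have := summands_noncrossing VT UT.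
rewrite /crossing /covers /subint; lia.
Qed.

Lemma summands_subint p U V : U \in T -> V \in T -> covers p U -> covers p V ->
  U.2 <= V.2 -> subint U V.
Proof.
move=> UT VT cU cV le_UV; case: (summands_nested UT VT cU cV) => // /subint_eq eVU.
by rewrite (eVU le_UV) /subint; lia.
Qed.

Definition adjacent U V := forall W, W \in T -> subint U W -> subint W V -> W = U \/ W = V.

(* The interval from the start of V to the end of U is compatible with T, hence a
   summand, and lies between U and V. *)
Lemma adjacent_common_end U V : U \in T -> V \in T -> subint U V -> adjacent U V ->
  U.1 = V.1 :> nat \/ U.1 + U.2 = V.1 + V.2.
Proof.
move=> UT VT UV adjUV.
have between W : W \in T -> subint U W -> subint W V ->
    (W.1 = U.1 :> nat /\ W.2 = U.2) \/ (W.1 = V.1 :> nat /\ W.2 = V.2).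
  by move=> WT UW WV; case: (adjUV W WT UW WV) => ->; [left|right].
have [? ?] := summand_wing UT; have [? ?] := summand_wing VT.
pose Z : ind n := (V.1, U.1 + U.2 - V.1).
have wZ : wing Z by move: UV; rewrite /wing /subint /=; lia.
have ZT : Z \in T.
  case: T_maxrigid => _ _ _; apply; first by move: UV; rewrite /valid /subint /=; lia.
    move=> W WT; have wW := summand_wing WT; have := between W WT.
    have := summands_noncrossing WT UT; have := summands_noncrossing UT WT.
    have := summands_noncrossing WT VT; have := summands_noncrossing VT WT.
    move: UV; rewrite /subint /crossing /= => UV.
    by split; [move/(ext1_wingE wW wZ) | move/(ext1_wingE wZ wW)];
      move: wW wZ; rewrite /wing /crossing /=; lia.
  by move/(ext1_wingE wZ wZ); rewrite /crossing; lia.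
by have := between Z ZT; move: UV; rewrite /subint /Z /=; lia.
Qed.

Lemma rad_T1_loop : rad T1 T1 (false, n - 2).
Proof.
apply: rad_basis; last by right.
apply/(homT_idx_wing _ _ (proj2 T1_wing)).
by rewrite tau2_fst // !tau_snd T1_fst T1_snd add0n modn_small /=; [split; lia | lia].
Qed.

(* A D-map between distinct nested summands forces one of them to be T1, and then
   it factors through the D-loop at T1. *)
Lemma irred_nested_T_map U V m : irred T U V m -> subint U V \/ subint V U -> U <> V -> m.1.
Proof.
case: m => [[] s] // [UT VT /radP[b _] nfact] UV nUV.
have [? wU] := summand_wing UT; have [? wV] := summand_wing VT.
have /(homT_idx_wing _ _ wV) := b; rewrite tau2_fst // !tau_snd /= => -[eV lt_s le_end].
have [[? e]|[? e]] := @modn_double_cases (U.1 + (n - 2)) ltac:(lia); rewrite e in eV le_end;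
  last by move: UV; rewrite /subint; lia.
rewrite /isbasis /= in b; exfalso; apply: nfact; exists T1; split => //.
case: UV => UV.
- have eV1 : V = T1 by apply: ind_eq; move: UV; rewrite /subint; lia.
  subst V; exists (true, 0), (false, n - 2); split.
  + apply: rad_basis; last by left.
    by apply/(homT_idx_wing _ _ wU); split => /=; lia.
  + exact: rad_T1_loop.
  + by rewrite /Defs.comp /isbasis /= subn0 (_ : n - 2 = s) ?b //; lia.
- have eU1 : U = T1 by apply: ind_eq; move: UV; rewrite /subint; lia.
  subst U; exists (false, n - 2), (true, nat_of_ord V.1); split.
  + exact: rad_T1_loop.
  + apply: rad_basis; last by left => eV1; apply: nUV.
    by apply/(homT_idx_wing _ _ (proj2 T1_wing)); split => /=; lia.
  + by rewrite /Defs.comp /isbasis /= (_ : n - 2 - V.1 = s) ?b ?ifT //; lia.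
Qed.

Lemma irred_mono_adjacent U V s : irred T U V (true, s) -> subint U V -> U <> V ->
  adjacent U V.
Proof.
move=> [UT VT /radP[b _] nfact] UV nUV W WT UW WV.
have [? wU] := summand_wing UT; have [? wW] := summand_wing WT.
move/(homT_idx_wing _ _ wU): b => /= [eV lt_s le_end].
have s0 : s = 0 by move: UV; rewrite /subint; lia.
case: (eqVneq U W) => [<-|nUW]; first by left.
case: (eqVneq W V) => [->|nWV]; first by right.
exfalso; apply: nfact; exists W; split => //; exists (true, 0), (true, 0); split.
- apply: rad_basis; last by left; apply/eqP.
  by apply/(homT_idx_wing _ _ wU); move: UW WV; rewrite /subint /= => ? ?; split; lia.
- apply: rad_basis; last by left; apply/eqP.
  by apply/(homT_idx_wing _ _ wW); move: UW WV; rewrite /subint /= => ? ?; split; lia.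
- by rewrite /Defs.comp /= s0; case: (summand_wing UT) => ->.
Qed.

Lemma irred_epi_adjacent U V s : irred T U V (true, s) -> subint V U -> U <> V ->
  adjacent V U.
Proof.
move=> [UT VT /radP[b _] nfact] VU nUV W WT VW WU.
have [? wU] := summand_wing UT; have [? wW] := summand_wing WT.
move/(homT_idx_wing _ _ wU): b => /= [eV lt_s le_end].
case: (eqVneq V W) => [<-|nVW]; first by left.
case: (eqVneq W U) => [->|nWU]; first by right.
exfalso; apply: nfact; exists W; split => //.
exists (true, W.1 - U.1), (true, V.1 - W.1); split.
- apply: rad_basis; last by left; apply/eqP; rewrite eq_sym.
  by apply/(homT_idx_wing _ _ wU); move: VW WU; rewrite /subint /= => ? ?; split; lia.
- apply: rad_basis; last by left; apply/eqP; rewrite eq_sym.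
  by apply/(homT_idx_wing _ _ wW); move: VW WU; rewrite /subint /= => ? ?; split; lia.
- by rewrite /Defs.comp /= ifT; [do 2 f_equal | ]; move: VW WU; rewrite /subint; lia.
Qed.

(* The arrow of the quiver from A to an adjacent larger summand B: the inclusion
   A -> B when they start together, the quotient B ->> A when they end together. *)
Definition step_letter A B : letter n :=
  if A.1 == B.1 then Letter (Arrow B A (true, 0)) false
  else Letter (Arrow A B (true, A.1 - B.1)) true.

Lemma step_letter_from A B : lfrom (step_letter A B) = A.
Proof. by rewrite /step_letter; case: eqP. Qed.

Lemma step_letter_to A B : lto (step_letter A B) = B.
Proof. by rewrite /step_letter; case: eqP. Qed.

Lemma step_letter_tube p A B : covers p A -> covers p B -> subint A B ->
  tube_letter p (step_letter A B).
Proof.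
rewrite /step_letter /tube_letter => cA cB [? ?]; case: eqP => _ /=.
  by rewrite cA cB.
by rewrite cA cB eqxx /=; apply/leP; lia.
Qed.

Lemma rad_T_factor U W V f g t : U \in T -> W \in T -> rad U W f -> rad W V g ->
  Defs.comp U V g f = Some (true, t) ->
  [/\ W.1 = U.1 + f.2 :> nat, V.1 = W.1 + g.2 :> nat,
      U.1 + U.2 <= W.1 + W.2 <= V.1 + V.2 &
      (W = U -> 0 < f.2) /\ (W = V -> 0 < g.2)].
Proof.
move=> UT WT /radP[bf nf] /radP[bg ng] /comp_someT[f1 g1 _ _].
have [_ wU] := summand_wing UT; have [_ wW] := summand_wing WT.
move: f g f1 g1 bf bg nf ng => [[] a] // [[] b] // _ _ /= bf bg nf ng.
move/(homT_idx_wing _ _ wU): bf => [eW _ le_UW]; move/(homT_idx_wing _ _ wW): bg => [eV _ le_WV].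
split=> //; first by apply/andP.
split.
- by move=> eWU; rewrite lt0n; apply/eqP => a0; apply: nf; rewrite ?a0.
- by move=> eWV; rewrite lt0n; apply/eqP => b0; apply: ng; rewrite ?b0.
Qed.

Lemma step_letter_arrow A B : A \in T -> B \in T -> subint A B -> A <> B -> adjacent A B ->
  is_arrow T (larr (step_letter A B)).
Proof.
move=> AT BT AB nAB adjAB; have [? wA] := summand_wing AT; have [? wB] := summand_wing BT.
have ends := adjacent_common_end AT BT AB adjAB; move: (AB) => [? ?].
rewrite /step_letter /is_arrow; case: eqP => [/(congr1 val) /= eA|nA] /=.
  split=> //.
  - apply: rad_basis; last by left.
    by apply/(homT_idx_wing _ _ wA); split => /=; lia.
  case=> W [WT [f [g [rf rg c]]]].
  have [eW eV /andP[? ?] [pos_f pos_g]] := rad_T_factor AT WT rf rg c.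
  have AW : subint A W by split; lia.
  have WB : subint W B by split; lia.
  by case: (adjAB W WT AW WB) => e; subst W; [have := pos_f erefl | have := pos_g erefl]; lia.
have {}nA : A.1 <> B.1 :> nat by move=> e; apply/nA/val_inj.
split=> //.
- apply: rad_basis; last by left => eBA; apply: nAB.
  by apply/(homT_idx_wing _ _ wB); split => /=; lia.
- case=> W [WT [f [g [rf rg c]]]].
  have [eW eV /andP[? ?] [pos_f pos_g]] := rad_T_factor BT WT rf rg c.
  have AW : subint A W by split; lia.
  have WB : subint W B by split; lia.
  by case: (adjAB W WT AW WB) => e; subst W; [have := pos_g erefl | have := pos_f erefl]; lia.
Qed.

Lemma nested_letterE A B (l : letter n) : A \in T -> B \in T -> subint A B -> A <> B ->
  is_arrow T (larr l) -> lfrom l = A -> lto l = B -> l = step_letter A B.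
Proof.
move=> AT BT AB nAB; have [? wA] := summand_wing AT; have [? wB] := summand_wing BT.
move: (AB) => [? ?].
case: l => [[src tgt m] []]; rewrite /lfrom /lto /is_arrow /= => irr eA eB; subst src tgt.
- have mT := irred_nested_T_map irr (or_intror AB) (nesym nAB).
  case: irr => _ _ /radP[+ _] _; case: m mT => [[] s] //= _.
  move/(homT_idx_wing _ _ wB) => /= [eA ? ?].
  rewrite /step_letter; case: eqP => [/(congr1 val) /= eAB|_]; last by do 3 f_equal; lia.
  by case: nAB; apply: ind_eq; lia.
- have mT := irred_nested_T_map irr (or_introl AB) nAB.
  case: irr => _ _ /radP[+ _] _; case: m mT => [[] s] //= _.
  move/(homT_idx_wing _ _ wA) => /= [eB ? ?].
  rewrite /step_letter; case: eqP => [_|nA]; first by do 3 f_equal; lia.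
  by case: nA; apply: val_inj => /=; lia.
Qed.

Lemma arrow_nested_adjacent A B (l : letter n) : A \in T -> B \in T -> subint A B ->
  A <> B -> is_arrow T (larr l) -> lfrom l = A -> lto l = B -> adjacent A B.
Proof.
move=> AT BT AB nAB arr eA eB; have := arr.
rewrite (nested_letterE AT BT AB nAB arr eA eB) /step_letter /is_arrow.
case: eqP => _ /= irr; first exact: irred_mono_adjacent irr AB nAB.
exact: irred_epi_adjacent irr AB (nesym nAB).
Qed.

Definition spanning (P : pred (ind n)) Y (w : str n) :=
  [/\ walk T (sstart w) (sletters w), uniq (verts w),
      forall Z, Z \in verts w <-> Z \in T /\ P Z & send w = Y].

Lemma spanning_single (P : pred (ind n)) Y : Y \in T -> P Y ->
  {in T, forall Z, P Z -> Z = Y} ->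
  spanning P Y (Str Y [::]) /\ forall w, spanning P Y w -> w = Str Y [::].
Proof.
move=> YT PY onlyY; split.
  split=> // Z; rewrite /verts /= inE.
  by split=> [/eqP -> //|[ZT /(onlyY Z ZT) ->]].
case=> v [|l ls] [w u mem e]; rewrite /send /= in e; first by rewrite e.
have /mem[lT /(onlyY _ lT) el] : lto l \in verts (Str v (l :: ls)) by rewrite !inE eqxx orbT.
have /mem[vT /(onlyY _ vT) ev] : v \in verts (Str v (l :: ls)) by rewrite inE eqxx.
by move: u; rewrite /verts /= inE el ev eqxx.
Qed.

Lemma spanning_rcons (P : pred (ind n)) Y' Y w (l : letter n) :
  spanning (predD1 P Y) Y' w -> Y \in T -> P Y ->
  is_arrow T (larr l) -> lfrom l = Y' -> lto l = Y ->
  spanning P Y (Str (sstart w) (rcons (sletters w) l)).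
Proof.
case: w => v ls [walk_ls uniq_ls mem_ls end_ls] /= YT PY arr from_l to_l; split.
- by apply/walk_rcons; rewrite from_l -end_ls to_l.
- rewrite verts_rcons rcons_uniq uniq_ls andbT to_l.
  by apply/negP => /mem_ls[_]; rewrite /= eqxx.
- move=> Z; rewrite verts_rcons mem_rcons inE to_l; split.
    by case/orP=> [/eqP -> //|/mem_ls[? /andP[]]].
  case=> ZT PZ; case: eqVneq => //= nZY.
  by apply/mem_ls; split => //=; rewrite nZY.
- by rewrite send_rcons.
Qed.

Lemma spanning_rconsE (P : pred (ind n)) Y v ls (l : letter n) :
  spanning P Y (Str v (rcons ls l)) ->
  [/\ spanning (predD1 P Y) (lfrom l) (Str v ls), is_arrow T (larr l) & lto l = Y].
Proof.
move=> [/walk_rcons[walk_ls [arr from_l _]] + mem_ls]; rewrite send_rcons => + to_l.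
rewrite verts_rcons rcons_uniq to_l => /andP[Y_new uniq_ls]; split => //; split => //.
move=> Z; split=> [Z_ls|[ZT /andP[nZY PZ]]].
  have /mem_ls[ZT PZ] : Z \in verts (Str v (rcons ls l)).
    by rewrite verts_rcons mem_rcons inE Z_ls orbT.
  by split => //=; rewrite PZ andbT; apply: contraNneq Y_new => <-.
have : Z \in verts (Str v (rcons ls l)) by apply/mem_ls.
by rewrite verts_rcons mem_rcons inE to_l (negPf nZY).
Qed.

Definition T_convex (P : pred (ind n)) :=
  forall U V W, U \in T -> V \in T -> W \in T -> P U -> P W ->
    subint U V -> subint V W -> P V.

Section Chain.
Variables (p : nat) (P : pred (ind n)) (Y Y' : ind n).
Hypotheses (P_covers : {in T, forall Z, P Z -> covers p Z}) (P_convex : T_convex P).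
Hypotheses (YT : Y \in T) (PY : P Y) (Y_max : {in T, forall Z, P Z -> Z.2 <= Y.2}).
Hypotheses (Y'T : Y' \in T) (PY' : predD1 P Y Y')
  (Y'_max : {in T, forall Z, predD1 P Y Z -> Z.2 <= Y'.2}).

Lemma predD1_convex : T_convex (predD1 P Y).
Proof.
move=> U V W UT VT WT /andP[_ PU] /andP[nWY PW] UV VW.
rewrite /= (P_convex UT VT WT) // andbT; apply/eqP => eVY; subst V.
by move/eqP: nWY; apply; rewrite (subint_eq VW (Y_max WT PW)).
Qed.

Lemma subint_top Z : Z \in T -> P Z -> subint Z Y.
Proof.
move=> ZT PZ; apply: (summands_subint ZT YT); try exact: P_covers.
exact: Y_max.
Qed.

Lemma second_subint : subint Y' Y.
Proof. by case/andP: (PY') => _; apply: subint_top. Qed.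

Lemma second_adjacent : adjacent Y' Y.
Proof.
move=> W WT Y'W WY; have /andP[_ PY'P] := PY'.
have PW := P_convex Y'T WT YT PY'P PY Y'W WY.
case: (eqVneq W Y) => [->|nWY]; [by right | left].
by apply/esym/subint_eq => //; apply: Y'_max; rewrite //= nWY.
Qed.

Lemma spanning_last_letter v ls (l : letter n) :
  spanning P Y (Str v (rcons ls l)) ->
  spanning (predD1 P Y) Y' (Str v ls) /\ l = step_letter Y' Y.
Proof.
move=> /spanning_rconsE[span arr to_l].
have /andP[nY'Y _] := PY'.
have [lT /andP[nlY Pl]] : lfrom l \in T /\ predD1 P Y (lfrom l).
  by case: (span) => _ _ mem end_ls; apply/mem; rewrite -end_ls; apply: mem_last.
have lY := subint_top lT Pl.
have adj := arrow_nested_adjacent lT YT lY (elimN eqP nlY) arr erefl to_l.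
have l_Y' : subint (lfrom l) Y'.
  apply: (summands_subint lT Y'T); [exact: P_covers | by case/andP: PY' => _; exact: P_covers | ].
  by apply: Y'_max; rewrite //= nlY.
have e : lfrom l = Y'.
  by case: (adj Y' Y'T l_Y' second_subint) => // eY'; move: nY'Y; rewrite eY' eqxx.
rewrite -e; split => //; exact: nested_letterE lT YT lY (elimN eqP nlY) arr erefl to_l.
Qed.

End Chain.

Lemma chain_string p (P : pred (ind n)) Y :
  {in T, forall Z, P Z -> covers p Z} -> T_convex P ->
  Y \in T -> P Y -> {in T, forall Z, P Z -> Z.2 <= Y.2} ->
  exists w, [/\ spanning P Y w, all (tube_letter p) (sletters w) &
                forall w', spanning P Y w' -> w' = w].
Proof.
move: {2}(count P T) (leqnn (count P T)) => m.
elim: m P Y => [|m IH] P Y le_count cov conv YT PY maxY.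
  have : 0 < count P T by rewrite -has_count; apply/hasP; exists Y.
  by rewrite lt0n -leqn0 le_count.
have [has_P'|none] := boolP (has (predD1 P Y) T); last first.
  have onlyY : {in T, forall Z, P Z -> Z = Y}.
    by move=> Z ZT PZ; apply/eqP; apply: contraNT (hasPn none Z ZT) => nZY; rewrite /= nZY.
  by have [span uniq_span] := spanning_single YT PY onlyY; exists (Str Y [::]).
have [Y' Y'T [PY' maxY']] := has_argmax (fun Z : ind n => Z.2) has_P'.
have cov' : {in T, forall Z, predD1 P Y Z -> covers p Z} by move=> Z ZT /andP[_]; exact: cov.
have le_count' : count (predD1 P Y) T <= m.
  by rewrite -ltnS; apply: leq_trans le_count; apply: count_predD1.
have [w' [span' tube' uniq']] :=
  IH _ _ le_count' cov' (predD1_convex conv maxY) Y'T PY' maxY'.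
have Y'Y := second_subint cov YT PY maxY Y'T PY'.
have adj := second_adjacent conv YT PY Y'T PY' maxY'.
have /andP[nY'Y PY'P] := PY'.
exists (Str (sstart w') (rcons (sletters w') (step_letter Y' Y))); split.
- have arr := step_letter_arrow Y'T YT Y'Y (elimN eqP nY'Y) adj.
  exact: spanning_rcons span' YT PY arr (step_letter_from _ _) (step_letter_to _ _).
- by rewrite all_rcons step_letter_tube ?cov.
- case=> v ls; case/lastP: ls => [|ls l] span.
    case: span => _ _ mem _; have /mem : Y \in T /\ P Y by [].
    have /mem : Y' \in T /\ P Y' by [].
    by rewrite !inE => /eqP eY' /eqP eY; move: nY'Y; rewrite eY eY' eqxx.
  have [span0 ->] := spanning_last_letter cov YT PY maxY Y'T PY' maxY' span.
  by rewrite -(uniq' _ span0).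
Qed.

Lemma inRk_summandE k X Z : Z \in T -> inRk k X Z <-> R_wing k X Z.
Proof.
move=> ZT; have wZ := summand_wing ZT.
split=> [[_ /(R_wingE k X n_ge2 wZ)] // | /(R_wingE k X n_ge2 wZ) RZ].
by split => //; case: wZ.
Qed.

Lemma R_disjoint_summands_iff X : inF X ->
  (forall Y, Y \in T -> ~ inR X Y) <-> exists Y, Y \in T /\ X = tau Y.
Proof.
move=> [X_pos XF]; case: T_maxrigid => _ /allP validT rigidT maxT.
split=> [noR|[Y [YT ->]] W WT RW]; last first.
  by apply: (rigidT W Y WT YT); case: RW => -[_ [s b]]; [exists (true, s) | exists (false, s)].
case: (leqP X.2 n.-1) => le_X; last first.
  (* Here X in F forbids X.1 = n-1, so T1 maps onto a submodule of X. *)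
  exfalso; apply: (noR T1 T1_T); left; split; first by rewrite /valid T1_snd; lia.
  exists (nat_of_ord X.1); apply/(homT_idx_wing _ _ (proj2 T1_wing)).
  by have := ltn_ord X.1; rewrite T1_fst T1_snd; split => /=; lia.
pose Y : ind n := (shift X.1 1, X.2).
have eX : X = tau Y.
  apply: ind_eq => //=; rewrite modnDml (_ : X.1 + 1 + n.-1 = X.1 + n); last by lia.
  by rewrite modnDr modn_small.
have no_ext W : W \in T -> ~ ext1_nz W Y.
  move=> WT [m b]; apply: (noR W WT); rewrite eX.
  by case: m b => [[] s] b; [left | right]; (split; [exact: validT WT | by exists s]).
exists Y; split => //; apply: maxT => //.
  by move=> W WT; split; [exact: no_ext | move/ext1_sym; exact: no_ext].
exact: ext1_self.
Qed.

Lemma subwing_not_both_R k X Ti Tj Tk :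
  T_subwing T Ti Tj Tk -> ~ (optR k X Tj /\ optR k X Tk).
Proof.
case=> [[[c [/andP[? ?] /andP[? ?] -> ->]]|[_ [[-> ->]|[-> ->]]]] [TiT [TjT TkT]]] /=;
  try by case.
have [_ wTi] := summand_wing TiT.
move=> [/(inRk_summandE _ _ TjT)/R_wing_covers + /(inRk_summandE _ _ TkT)/R_wing_covers].
by rewrite /covers /= modn_small; lia.
Qed.

Lemma R_string_unique k X Y :
  Y \in T -> inRk k X Y -> {in T, forall Z, inRk k X Z -> Z.2 <= Y.2} ->
  (exists! w, good_string T k X Y w) /\ (forall w, good_string T k X Y w -> no_D_letter w).
Proof.
move=> YT RY maxY.
pose P := R_wing k X.
have cov : {in T, forall Z, P Z -> covers (R_point k X) Z} by move=> Z _; exact: R_wing_covers.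
have conv : T_convex P by move=> U V W _ _ _; exact: R_wing_convex.
have maxY' : {in T, forall Z, P Z -> Z.2 <= Y.2}.
  by move=> Z ZT /(inRk_summandE _ _ ZT); apply: maxY.
have PY : P Y by apply/(inRk_summandE _ _ YT).
have [w [span tube uniq_w]] := chain_string cov conv YT PY maxY'.
have memE Z : (Z \in T /\ inRk k X Z) <-> (Z \in T /\ P Z).
  by split=> -[ZT RZ]; split => //; apply/(inRk_summandE _ _ ZT).
have good_span w' : good_string T k X Y w' -> w' = w.
  case=> -[walk_w' _ _] uniq_w' mem_w' end_w'; apply: uniq_w; split => // Z.
  exact: iff_trans (mem_w' Z) (memE Z).
split.
  exists w; split; last by move=> w' /good_span.
  case: (span) => walk_w uniq_vw mem_w end_w; split => //.
    split => //; first exact: walk_noinv walk_w uniq_vw.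
    exact: nozero_tube_letters (walk_linked walk_w) tube.
  by move=> Z; apply: iff_trans (mem_w Z) (iff_sym (memE Z)).
move=> w' /good_span ->; apply: sub_all tube => l /and3P[_ _].
by case: ifP => _ => [/andP[/eqP -> _] | /eqP ->].
Qed.

End Summands.

End Tube.

Theorem lemma4p4 (n : nat) (T : seq (ind n)) (k : bool) (X : ind n) :
  2 <= n -> maxrigid T ->
  (exists T1, [/\ T1 \in T, val T1.1 = 0 & T1.2 = n.-1]) ->
  inF X ->
  [/\ (* (i) *)
      ((forall Y, Y \in T -> ~ inR X Y) <-> (exists Y, Y \in T /\ X = tau Y)),
      (* (ii) *)
      (forall Ti Tj Tk, T_subwing T Ti Tj Tk -> ~ (optR k X Tj /\ optR k X Tk)) &
      (* (iii) and (iv) *)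
      ((exists Y, Y \in T /\ inRk k X Y) ->
       forall Y, Y \in T -> inRk k X Y ->
         (forall Z, Z \in T -> inRk k X Z -> Z.2 <= Y.2) ->
         (exists! s, good_string T k X Y s) /\
         (forall s, good_string T k X Y s -> no_D_letter s))].
Proof.
move=> n_ge2 T_maxrigid [T1 [T1_T T1_fst T1_snd]] XF; split.
- exact: (R_disjoint_summands_iff n_ge2 T_maxrigid T1_T T1_fst T1_snd XF).
- move=> Ti Tj Tk; exact: (subwing_not_both_R n_ge2 T_maxrigid T1_T T1_fst T1_snd).
- move=> _ Y; exact: (R_string_unique n_ge2 T_maxrigid T1_T T1_fst T1_snd).
Qed.
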